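(* Let $A\in\mathbb{R}^{m\times n}$, $L\in\mathbb{R}^{p\times n}$ with $\mathcal{N}(A)\cap\mathcal{N}(L)=\{0\}$, let $b\in\mathbb{R}^m$ and $\mu>0$. Let $\tilde V_1\in\mathbb{R}^{n\times l}$ have orthonormal columns, and set $\widehat A = A\tilde V_1$, $\widehat L = L\tilde V_1$. Suppose the matrix pair $(\widehat A,\widehat L)$ has a generalized SVD $$\widehat A = \widehat U \widehat C \widehat G^{-1},\qquad \widehat L = \widehat V\widehat S\widehat G^{-1},$$ where $\widehat U\in\mathbb{R}^{m\times l}$ and $\widehat V\in\mathbb{R}^{p\times l}$ have orthonormal columns, $\widehat C,\widehat S\in\mathbb{R}^{l\times l}$ are diagonal with nonnegative entries and $\widehat C^T\widehat C+\widehat S^T\widehat S=I$, and $\widehat G\in\mathbb{R}^{l\times l}$ is nonsingular. Define $$\widetilde A = A\tilde V_1\tilde V_1^T,\qquad \widetilde L = L\tilde V_1\tilde V_1^T.$$ Then the vector $$\tilde V_1 \widehat G(\widehat C^T\widehat C+\mu^2\widehat S^T\widehat S)^{-1}\widehat C^T\widehat U^T b$$ is the least-squares solution with minimum norm of $$\min_{x\in\mathbb{R}^n}\|\widetilde A x - b\|^2+\mu^2\|\widetilde L x\|^2,$$ i.e. the minimizer of this problem having minimal Euclidean norm.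
   Context: All norms are Euclidean 2-norms; $\mathcal{N}(M)$ denotes the null space of a matrix $M$. In the paper, $\tilde V_1$ is typically obtained as the approximate right singular vectors of $A$ from a randomized SVD, but the statement holds for any $\tilde V_1$ with orthonormal columns. *)

From HB Require Import structures.
From mathcomp Require Import all_boot all_order all_algebra.
Set Implicit Arguments. Unset Strict Implicit. Unset Printing Implicit Defensive.
Import Order.TTheory GRing.Theory Num.Theory.
Local Open Scope ring_scope.

Definition sqnorm (R : realFieldType) (k : nat) (x : 'cV[R]_k) : R :=
  \sum_(i < k) (x i 0) ^+ 2.

Definition orthonormal_cols (R : realFieldType) (r c : nat) (Q : 'M[R]_(r, c)) : Prop :=
  Q^T *m Q = 1%:M.

Definition nonneg_diag (R : realFieldType) (k : nat) (D : 'M[R]_k) : Prop :=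
  is_diag_mx D /\ forall i, 0 <= D i i.

Definition tik_obj (R : realFieldType) (m n p : nat)
  (A : 'M[R]_(m, n)) (L : 'M[R]_(p, n)) (b : 'cV[R]_m) (mu : R) (x : 'cV[R]_n) : R :=
  sqnorm (A *m x - b) + mu ^+ 2 * sqnorm (L *m x).

Definition min_norm_minimizer (R : realFieldType) (n : nat)
  (J : 'cV[R]_n -> R) (x0 : 'cV[R]_n) : Prop :=
  (forall x, J x0 <= J x) /\
  (forall x, (forall y, J x <= J y) -> sqnorm x0 <= sqnorm x).

From HB Require Import structures.
From mathcomp Require Import all_boot all_order all_algebra.
From mathcomp Require Import ring lra.
Import Order.TTheory GRing.Theory Num.Theory.
Set Implicit Arguments. Unset Strict Implicit.
Local Open Scope ring_scope.

(* Writing [z = G^-1 V1^T x], the objective only depends on [x] through [z] and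
   equals [q z = ||U C z - b||^2 + mu^2 ||V S z||^2].  Since [C^T C + S^T S = I],
   the normal matrix [M = C^T C + mu^2 S^T S] is positive definite, so [q] has the
   unique minimizer [z0 = M^-1 C^T U^T b], and the minimizers of the objective are
   exactly the [x] with [V1^T x = G z0].  Among them [x0 = V1 G z0] lies in the
   range of [V1] while [x - x0] lies in the kernel of [V1^T], so Pythagoras gives
   [||x0|| <= ||x||]. *)

Section InnerProduct.
Variable R : realFieldType.

Definition dot (k : nat) (u v : 'cV[R]_k) : R := (u^T *m v) 0 0.

Lemma sqnorm_dot k (u : 'cV[R]_k) : sqnorm u = dot u u.
Proof. by rewrite /sqnorm /dot mxE; apply: eq_bigr => i _; rewrite !mxE expr2. Qed.

Lemma dotC k (u v : 'cV[R]_k) : dot u v = dot v u.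
Proof.
rewrite /dot; have -> : (v^T *m u) 0 0 = ((v^T *m u)^T) 0 0 by rewrite !mxE.
by rewrite trmx_mul trmxK.
Qed.

Lemma dotMl j k (A : 'M[R]_(j, k)) u v : dot (A *m u) v = dot u (A^T *m v).
Proof. by rewrite /dot trmx_mul !mulmxA. Qed.

Lemma dotMr j k (A : 'M[R]_(j, k)) u v : dot u (A *m v) = dot (A^T *m u) v.
Proof. by rewrite dotC dotMl dotC. Qed.

Lemma dotDl k (u v w : 'cV[R]_k) : dot (u + v) w = dot u w + dot v w.
Proof. by rewrite /dot linearD /= mulmxDl mxE. Qed.

Lemma dotDr k (u v w : 'cV[R]_k) : dot w (u + v) = dot w u + dot w v.
Proof. by rewrite /dot mulmxDr mxE. Qed.

Lemma dotZl k a (u w : 'cV[R]_k) : dot (a *: u) w = a * dot u w.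
Proof. by rewrite /dot linearZ /= -scalemxAl mxE. Qed.

Lemma dotZr k a (u w : 'cV[R]_k) : dot w (a *: u) = a * dot w u.
Proof. by rewrite dotC dotZl dotC. Qed.

Lemma dot0l k (w : 'cV[R]_k) : dot 0 w = 0.
Proof. by rewrite /dot linear0 mul0mx mxE. Qed.

Lemma dot0r k (w : 'cV[R]_k) : dot w 0 = 0.
Proof. by rewrite dotC dot0l. Qed.

Lemma sqnorm_ge0 k (u : 'cV[R]_k) : 0 <= sqnorm u.
Proof. by apply: sumr_ge0 => i _; apply: sqr_ge0. Qed.

Lemma sqnorm_eq0 k (u : 'cV[R]_k) : sqnorm u = 0 -> u = 0.
Proof.
move=> u0; apply/matrixP => i j; rewrite ord1 mxE.
have := psumr_eq0P (fun i _ => sqr_ge0 (u i 0)) u0 (i := i) isT.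
by move/eqP; rewrite sqrf_eq0 => /eqP.
Qed.

Lemma sqnormD k (u v : 'cV[R]_k) :
  sqnorm (u + v) = sqnorm u + 2 * dot u v + sqnorm v.
Proof. rewrite !sqnorm_dot dotDl !dotDr (dotC v u); ring. Qed.

Lemma sqnormD_orth k (u v : 'cV[R]_k) :
  dot u v = 0 -> sqnorm (u + v) = sqnorm u + sqnorm v.
Proof. by move=> uv; rewrite sqnormD uv mulr0 addr0. Qed.

Lemma sqnorm_wsum_eq0 j k c (u : 'cV[R]_j) (v : 'cV[R]_k) :
  0 < c -> sqnorm u + c * sqnorm v <= 0 -> u = 0 /\ v = 0.
Proof.
move=> c_gt0 sum_le0.
have u_ge0 := sqnorm_ge0 u; have v_ge0 := sqnorm_ge0 v.
have cv_ge0 : 0 <= c * sqnorm v by rewrite mulr_ge0 // ltW.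
have cv0 : c * sqnorm v = 0 by lra.
move: cv0 => /eqP; rewrite mulf_eq0 gt_eqF //= => /eqP /sqnorm_eq0 ->.
by split=> //; apply: sqnorm_eq0; lra.
Qed.

Lemma orthonormal_cols_dot r k (Q : 'M[R]_(r, k)) u v :
  orthonormal_cols Q -> dot (Q *m u) (Q *m v) = dot u v.
Proof. by move=> hQ; rewrite dotMl mulmxA hQ mul1mx. Qed.

Lemma orthonormal_cols_sqnorm r k (Q : 'M[R]_(r, k)) u :
  orthonormal_cols Q -> sqnorm (Q *m u) = sqnorm u.
Proof. by move=> hQ; rewrite !sqnorm_dot orthonormal_cols_dot. Qed.

End InnerProduct.

Lemma unitmx_ker0 (R : fieldType) k (M : 'M[R]_k) :
  (forall d : 'cV[R]_k, M *m d = 0 -> d = 0) -> M \in unitmx.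
Proof.
move=> ker0; rewrite -unitmx_tr unitmxE unitfE; apply/negP => /det0P [v v_neq0].
move/(congr1 trmx); rewrite trmx_mul trmxK linear0 => /ker0 /(congr1 trmx).
by rewrite trmxK linear0 => v0; rewrite v0 eqxx in v_neq0.
Qed.

(* The normal equations of [||P z - b||^2 + c ||Q z||^2] make the cross terms vanish. *)
Lemma regularized_lsq_expand (R : realFieldType) r s k
    (P : 'M[R]_(r, k)) (Q : 'M[R]_(s, k)) (b : 'cV[R]_r) (c : R) z d :
  (P^T *m P + c *: (Q^T *m Q)) *m z = P^T *m b ->
  sqnorm (P *m (z + d) - b) + c * sqnorm (Q *m (z + d))
  = sqnorm (P *m z - b) + c * sqnorm (Q *m z)
    + (sqnorm (P *m d) + c * sqnorm (Q *m d)).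
Proof.
move=> normal_eq.
have cross : dot (P *m z - b) (P *m d) + c * dot (Q *m z) (Q *m d) = 0.
  rewrite !dotMr -dotZl -dotDl mulmxBr addrAC !mulmxA scalemxAl -mulmxDl.
  by rewrite normal_eq subrr dot0l.
rewrite !mulmxDr addrAC (sqnormD (P *m z - b)) (sqnormD (Q *m z)); lra.
Qed.

Lemma unique_minimizer_min_norm (R : realFieldType) n l
    (W : 'M[R]_(n, l)) (G : 'M[R]_l) (J : 'cV[R]_n -> R) (q : 'cV[R]_l -> R)
    (z0 : 'cV[R]_l) :
  orthonormal_cols W -> G \in unitmx ->
  (forall x, J x = q (invmx G *m (W^T *m x))) ->
  (forall z, q z0 <= q z) -> (forall z, q z <= q z0 -> z = z0) ->
  min_norm_minimizer J (W *m (G *m z0)).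
Proof.
move=> hW G_unit J_eq z0_min z0_unique.
have Wx0 : W^T *m (W *m (G *m z0)) = G *m z0 by rewrite mulmxA hW mul1mx.
have coord_x0 : invmx G *m (W^T *m (W *m (G *m z0))) = z0 by rewrite Wx0 mulKmx.
split=> [x | x x_min]; first by rewrite !J_eq coord_x0.
have coord_x : invmx G *m (W^T *m x) = z0.
  by apply: z0_unique; rewrite -[in X in _ <= X]coord_x0 -!J_eq.
have Wx : W^T *m x = G *m z0 by rewrite -coord_x mulKVmx.
have range_perp_ker : dot (W *m (G *m z0)) (x - W *m (G *m z0)) = 0.
  by rewrite dotMl mulmxBr Wx Wx0 subrr dot0r.
rewrite -[X in _ <= sqnorm X](subrKC (W *m (G *m z0)) x).
by rewrite sqnormD_orth // lerDl sqnorm_ge0.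
Qed.

Section GeneralizedSVD.
Variables (R : realFieldType) (m p l : nat).
Variables (U : 'M[R]_(m, l)) (V : 'M[R]_(p, l)) (C S : 'M[R]_l).
Variables (b : 'cV[R]_m) (mu : R).
Hypotheses (hU : orthonormal_cols U) (hV : orthonormal_cols V).
Hypothesis hCS : C^T *m C + S^T *m S = 1%:M.
Hypothesis mu_gt0 : 0 < mu.

Let M := C^T *m C + (mu ^+ 2) *: (S^T *m S).
Let q := tik_obj (U *m C) (V *m S) b mu.
Let z0 := invmx M *m (C^T *m U^T *m b).

Let mu2_gt0 : 0 < mu ^+ 2. Proof. by rewrite exprn_gt0. Qed.

Lemma gsvd_quad_eq0 d :
  sqnorm (C *m d) + mu ^+ 2 * sqnorm (S *m d) <= 0 -> d = 0.
Proof.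
case/(sqnorm_wsum_eq0 mu2_gt0) => Cd0 Sd0.
by rewrite -[d]mul1mx -hCS mulmxDl -!mulmxA Cd0 Sd0 !mulmx0 addr0.
Qed.

Lemma gsvd_normal_mx_unit : M \in unitmx.
Proof.
apply: unitmx_ker0 => d Md0; apply: gsvd_quad_eq0.
have : dot d (M *m d) = 0 by rewrite Md0 dot0r.
rewrite /M mulmxDl dotDr -scalemxAl dotZr -!mulmxA.
by rewrite [dot d (C^T *m _)]dotMr [dot d (S^T *m _)]dotMr !trmxK -!sqnorm_dot => ->.
Qed.

Lemma gsvd_tik_expand d :
  q (z0 + d) = q z0 + (sqnorm (C *m d) + mu ^+ 2 * sqnorm (S *m d)).
Proof.
rewrite /q /tik_obj regularized_lsq_expand.
  rewrite -(mulmxA U C d) -(mulmxA V S d).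
  by rewrite (orthonormal_cols_sqnorm _ hU) (orthonormal_cols_sqnorm _ hV).
have gram_UC : (U *m C)^T *m (U *m C) = C^T *m C.
  by rewrite trmx_mul mulmxA -(mulmxA C^T) hU mulmx1.
have gram_VS : (V *m S)^T *m (V *m S) = S^T *m S.
  by rewrite trmx_mul mulmxA -(mulmxA S^T) hV mulmx1.
by rewrite gram_UC gram_VS -/M /z0 mulKVmx ?gsvd_normal_mx_unit // trmx_mul.
Qed.

Lemma gsvd_tik_min z : q z0 <= q z.
Proof.
rewrite -(subrKC z0 z) gsvd_tik_expand lerDl.
by rewrite addr_ge0 ?sqnorm_ge0 // mulr_ge0 ?sqnorm_ge0 // ltW.
Qed.

Lemma gsvd_tik_min_unique z : q z <= q z0 -> z = z0.
Proof.
rewrite -(subrKC z0 z) gsvd_tik_expand gerDl => /gsvd_quad_eq0 ->.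
by rewrite addr0.
Qed.

End GeneralizedSVD.

Theorem lemma1 (R : realFieldType) (m n p l : nat)
  (A : 'M[R]_(m, n)) (L : 'M[R]_(p, n)) (b : 'cV[R]_m) (mu : R)
  (V1 : 'M[R]_(n, l))
  (U : 'M[R]_(m, l)) (V : 'M[R]_(p, l)) (C S G : 'M[R]_l) :
  (forall x : 'cV[R]_n, A *m x = 0 -> L *m x = 0 -> x = 0) ->
  0 < mu ->
  orthonormal_cols V1 ->
  orthonormal_cols U -> orthonormal_cols V ->
  nonneg_diag C -> nonneg_diag S ->
  C^T *m C + S^T *m S = 1%:M ->
  G \in unitmx ->
  A *m V1 = U *m C *m invmx G ->
  L *m V1 = V *m S *m invmx G ->
  min_norm_minimizer (tik_obj (A *m V1 *m V1^T) (L *m V1 *m V1^T) b mu)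
    (V1 *m G *m invmx (C^T *m C + (mu ^+ 2) *: (S^T *m S)) *m C^T *m U^T *m b).
Proof.
move=> _ mu_gt0 hV1 hU hV _ _ hCS G_unit hA hL.
set M := C^T *m C + _ *: _.
have -> : V1 *m G *m invmx M *m C^T *m U^T *m b
          = V1 *m (G *m (invmx M *m (C^T *m U^T *m b))) by rewrite !mulmxA.
apply: (unique_minimizer_min_norm (q := tik_obj (U *m C) (V *m S) b mu) hV1 G_unit).
- by move=> x; rewrite /tik_obj !mulmxA hA hL.
- exact: gsvd_tik_min.
- exact: gsvd_tik_min_unique.
Qed.
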